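(* Let $0<a,b<1$, $r>as$, $s>br$. For every $\alpha\in(\rho_1,1)\cap[0,1)$, $\beta\in(\rho_2,1)\cap[0,1)$ and every $x,y>0$, $$V(T_{\alpha,\beta}(x,y))-V(x,y)\le -bx\,\Psi(\alpha,X,r)-ay\,\Psi(\beta,Y,s)\le 0,$$ where $X=r-x-ay$, $Y=s-bx-y$; moreover $V(T_{\alpha,\beta}(x,y))-V(x,y)<0$ for every $(x,y)\ne(p,q)$ with $x,y>0$.
   Context: $p=\frac{r-as}{1-ab}$, $q=\frac{s-br}{1-ab}$. $T_{\alpha,\beta}(x,y)=\big(x[(1-\alpha)e^{r-x-ay}+\alpha],\,y[(1-\beta)e^{s-bx-y}+\beta]\big)$. $V(x,y)=bx^2+ay^2+2abxy-2rbx-2say$. For $u\in\mathbb R$, $\varsigma\in[0,1)$, $t>0$: $\Phi(\varsigma,u,t)=(1-\varsigma)(1-e^u)(t-u)+2u$ and $\Psi(\varsigma,u,t)=(1-\varsigma)(e^u-1)\Phi(\varsigma,u,t)$. $\rho_1=\frac{e^{r-2}-1}{e^{r-2}+1}$, $\rho_2=\frac{e^{s-2}-1}{e^{s-2}+1}$. *)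

From Stdlib Require Import Reals.
Open Scope R_scope.

Definition pP (a b r s : R) : R := (r - a * s) / (1 - a * b).
Definition qQ (a b r s : R) : R := (s - b * r) / (1 - a * b).

Definition T (a b r s alpha beta : R) (xy : R * R) : R * R :=
  let (x, y) := xy in
  (x * ((1 - alpha) * exp (r - x - a * y) + alpha),
   y * ((1 - beta) * exp (s - b * x - y) + beta)).

Definition V (a b r s : R) (xy : R * R) : R :=
  let (x, y) := xy in
  b * x ^ 2 + a * y ^ 2 + 2 * a * b * x * y - 2 * r * b * x - 2 * s * a * y.

Definition Phi (vs u t : R) : R :=
  (1 - vs) * (1 - exp u) * (t - u) + 2 * u.

Definition Psi (vs u t : R) : R :=
  (1 - vs) * (exp u - 1) * Phi vs u t.

Definition rho (r : R) : R := (exp (r - 2) - 1) / (exp (r - 2) + 1).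

(* Write one step of [T] as (x, y) |-> (x + u, y + v) with u = x (1 - alpha) (e^X - 1) and
   v = y (1 - beta) (e^Y - 1).  Since V is quadratic with gradient -2 (b X, a Y), its increment
   is exactly  -b x Psi(alpha,X,r) - a y Psi(beta,Y,s) - a b (u y - v x)^2 / (x y).
   With c = 1 - alpha, Phi(alpha,.,r) vanishes at 0 and is strictly increasing, because its
   derivative 2 - c + c e^u (u - r + 1) is at least 2 - c (1 + e^(r-2)) > 0, which is exactly
   the condition alpha > rho_1.  So Phi(alpha,X,r) has the sign of X and Psi(alpha,X,r) > 0
   for X <> 0; finally X = Y = 0 only at the interior fixed point (p, q). *)

From Stdlib Require Import Reals Lra Psatz.
From Coquelicot Require Import Coquelicot.
Open Scope R_scope.

Lemma exp_mul_one_sub_le1 (w : R) : exp w * (1 - w) <= 1.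
Proof.
  assert (Hinv : exp w * exp (- w) = 1).
  { rewrite <- exp_plus, Rplus_opp_r. exact exp_0. }
  pose proof (exp_ineq1_le (- w)); pose proof (exp_pos w); nra.
Qed.

Lemma rho_lt_mul_exp_lt2 (t vs : R) : rho t < vs -> (1 - vs) * (1 + exp (t - 2)) < 2.
Proof.
  unfold rho; intro Hlt.
  pose proof (exp_pos (t - 2)) as He.
  apply Rmult_lt_compat_r with (r := exp (t - 2) + 1) in Hlt; [|lra].
  unfold Rdiv in Hlt; rewrite Rmult_assoc, Rinv_l in Hlt by lra.
  lra.
Qed.

Lemma Phi_derive_pos (vs t u : R) : vs <= 1 -> (1 - vs) * (1 + exp (t - 2)) < 2 ->
  0 < 2 - (1 - vs) + (1 - vs) * exp u * (1 - t + u).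
Proof.
  intros Hvs Hw.
  (* e^u (u - t + 1) is minimal at u = t - 2, with value -e^(t-2). *)
  assert (Hmin : exp u * (1 - t + u) >= - exp (t - 2)).
  { assert (Hsplit : exp u = exp (u - t + 2) * exp (t - 2)).
    { rewrite <- exp_plus; f_equal; ring. }
    pose proof (exp_mul_one_sub_le1 (u - t + 2)).
    pose proof (exp_pos (t - 2)).
    rewrite Hsplit; nra. }
  nra.
Qed.

Lemma Phi_strict_increasing (vs t : R) : vs <= 1 -> (1 - vs) * (1 + exp (t - 2)) < 2 ->
  forall u w, u < w -> Phi vs u t < Phi vs w t.
Proof.
  intros Hvs Hw u w Huw.
  apply (incr_function (fun u => Phi vs u t) m_infty p_infty
           (fun u => 2 - (1 - vs) + (1 - vs) * exp u * (1 - t + u))); try easy.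
  - intros z _ _; unfold Phi; auto_derive; [easy | ring].
  - intros z _ _; exact (Phi_derive_pos vs t z Hvs Hw).
Qed.

Lemma expm1_mul_Phi_pos (vs u t : R) : rho t < vs -> vs <= 1 -> u <> 0 ->
  0 < (exp u - 1) * Phi vs u t.
Proof.
  intros Hrho Hvs Hu.
  pose proof (Phi_strict_increasing vs t Hvs (rho_lt_mul_exp_lt2 t vs Hrho)) as Hincr.
  assert (Phi0 : Phi vs 0 t = 0) by (unfold Phi; rewrite exp_0; ring).
  destruct (Rdichotomy _ _ Hu) as [Hneg | Hpos].
  - pose proof (Hincr u 0 Hneg).
    assert (exp u < 1) by (rewrite <- exp_0; apply exp_increasing; exact Hneg).
    nra.
  - pose proof (Hincr 0 u Hpos).
    assert (1 < exp u) by (rewrite <- exp_0; apply exp_increasing; exact Hpos).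
    nra.
Qed.

Lemma Psi_gt0 (vs u t : R) : rho t < vs -> vs < 1 -> u <> 0 -> 0 < Psi vs u t.
Proof.
  intros Hrho Hvs Hu.
  unfold Psi; rewrite Rmult_assoc.
  apply Rmult_lt_0_compat; [lra | apply expm1_mul_Phi_pos; auto; lra].
Qed.

Lemma Psi_ge0 (vs u t : R) : rho t < vs -> vs < 1 -> 0 <= Psi vs u t.
Proof.
  intros Hrho Hvs.
  destruct (Req_dec u 0) as [-> | Hu].
  - unfold Psi; rewrite exp_0; lra.
  - exact (Rlt_le _ _ (Psi_gt0 vs u t Hrho Hvs Hu)).
Qed.

Lemma V_T_sub_V (a b r s alpha beta x y : R) : x <> 0 -> y <> 0 ->
  let X := r - x - a * y in
  let Y := s - b * x - y in
  let u := x * (1 - alpha) * (exp X - 1) in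
  let v := y * (1 - beta) * (exp Y - 1) in
  V a b r s (T a b r s alpha beta (x, y)) - V a b r s (x, y)
  = - b * x * Psi alpha X r - a * y * Psi beta Y s - a * b * (u * y - v * x) ^ 2 / (x * y).
Proof.
  intros Hx Hy X Y u v.
  unfold V, T, Psi, Phi, u, v, X, Y; field; auto.
Qed.

Lemma V_T_sub_V_le (a b r s alpha beta x y : R) : 0 < a -> 0 < b -> 0 < x -> 0 < y ->
  V a b r s (T a b r s alpha beta (x, y)) - V a b r s (x, y)
  <= - b * x * Psi alpha (r - x - a * y) r - a * y * Psi beta (s - b * x - y) s.
Proof.
  intros Ha Hb Hx Hy.
  rewrite (V_T_sub_V a b r s alpha beta x y) by lra; cbv zeta.
  set (w := _ ^ 2).
  assert (0 <= a * b * w / (x * y)).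
  { apply Rmult_le_pos; [|apply Rlt_le, Rinv_0_lt_compat; nra].
    apply Rmult_le_pos; [nra | apply pow2_ge_0]. }
  lra.
Qed.

Lemma fixed_point_eq (a b r s x y : R) : a * b <> 1 ->
  r - x - a * y = 0 -> s - b * x - y = 0 -> (x, y) = (pP a b r s, qQ a b r s).
Proof.
  intros Hab HX HY.
  assert (Hden : 1 - a * b <> 0) by lra.
  unfold pP, qQ; f_equal; field_simplify_eq; auto; nra.
Qed.

Theorem mainTheorem8 (a b r s : R) :
  0 < a < 1 -> 0 < b < 1 -> r > a * s -> s > b * r ->
  forall alpha beta : R,
    rho r < alpha < 1 -> 0 <= alpha ->
    rho s < beta < 1 -> 0 <= beta ->
    forall x y : R, 0 < x -> 0 < y ->
      let X := r - x - a * y in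
      let Y := s - b * x - y in
      let D := V a b r s (T a b r s alpha beta (x, y)) - V a b r s (x, y) in
      D <= - b * x * Psi alpha X r - a * y * Psi beta Y s /\
      - b * x * Psi alpha X r - a * y * Psi beta Y s <= 0 /\
      ((x, y) <> (pP a b r s, qQ a b r s) -> D < 0).
Proof.
  intros Ha Hb _ _ alpha beta [Hra Ha1] _ [Hsb Hb1] _ x y Hx Hy X Y D.
  assert (HD : D <= - b * x * Psi alpha X r - a * y * Psi beta Y s)
    by (apply V_T_sub_V_le; lra).
  assert (PX : 0 <= b * x * Psi alpha X r)
    by (apply Rmult_le_pos; [nra | exact (Psi_ge0 alpha X r Hra Ha1)]).
  assert (PY : 0 <= a * y * Psi beta Y s)
    by (apply Rmult_le_pos; [nra | exact (Psi_ge0 beta Y s Hsb Hb1)]).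
  split; [exact HD | split; [lra | intro Hne]].
  destruct (Req_dec X 0) as [HX | HX]; [destruct (Req_dec Y 0) as [HY | HY] |].
  - exfalso; apply Hne, fixed_point_eq; auto; nra.
  - assert (0 < a * y * Psi beta Y s)
      by (apply Rmult_lt_0_compat; [nra | exact (Psi_gt0 beta Y s Hsb Hb1 HY)]).
    lra.
  - assert (0 < b * x * Psi alpha X r)
      by (apply Rmult_lt_0_compat; [nra | exact (Psi_gt0 alpha X r Hra Ha1 HX)]).
    lra.
Qed.
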